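(* Let $\boldsymbol{Y}_t$ be an $n\times 1$ vector of observed variables generated by the structural vector moving average model $$\boldsymbol{Y}_t=\boldsymbol{\Theta}(L)\boldsymbol{\varepsilon}_t=\sum_{j=0}^{\infty}\boldsymbol{\Theta}_j\boldsymbol{\varepsilon}_{t-j},$$ where $\boldsymbol{\varepsilon}_t=(\varepsilon_{1,t},\dots,\varepsilon_{m,t})'$ is an $m\times1$ vector of unobserved structural shocks with $E[\boldsymbol{\varepsilon}_t]=0$, $E[\boldsymbol{\varepsilon}_t\boldsymbol{\varepsilon}_t']>0$ and mutually uncorrelated components, and each $\boldsymbol{\Theta}_h$ is an $n\times m$ matrix. Let $x_t$ be the first element and $y_t$ the last element of $\boldsymbol{Y}_t$, let $\theta_{h,xs}$ denote the $(1,s)$-th element and $\theta_{h,ys}$ the $(n,s)$-th element of $\boldsymbol{\Theta}_h$. Fix $1\le S\le m$, let $\xi_t=\sum_{s=1}^{S}\varepsilon_{s,t}$, and assume the unit effect normalization $\theta_{0,xs}=1$ for all $s=1,\dots,S$. Let $z_t$ be a random variable satisfying: (i) $E[z_t\xi_t]\neq 0$; (ii) $E[z_t\varepsilon_{s,t}]=0$ for all $s=S+1,\dots,m$; (iii) $E[z_t\boldsymbol{\varepsilon}_{t+j}]=0$ for all $j\neq 0$. Write $\alpha_s=E[z_t\varepsilon_{s,t}]$ for $s=1,\dots,S$. Then for every $h=0,1,2,\dots$, $$\beta_h\equiv\frac{Cov(y_{t+h},z_t)}{Cov(x_t,z_t)}=\sum_{s=1}^{S}w_s\theta_{h,ys},\qquad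 w_s=\frac{\alpha_s}{\sum_{s'=1}^{S}\alpha_{s'}}.$$ Furthermore, if in addition either $\alpha_s\ge 0$ for all $s=1,\dots,S$ or $\alpha_s\le 0$ for all $s=1,\dots,S$, then $w_s\ge 0$ for all $s=1,\dots,S$.
   Context: All moments involved are assumed finite and the moving average series is assumed to converge so that covariances can be computed term by term. $L$ is the lag operator and $\boldsymbol{\Theta}(L)=\boldsymbol{\Theta}_0+\boldsymbol{\Theta}_1L+\boldsymbol{\Theta}_2L^2+\cdots$. *)

From HB Require Import structures.
From mathcomp Require Import all_boot all_order all_algebra.
From mathcomp Require Import all_classical all_reals all_analysis.
Set Implicit Arguments. Unset Strict Implicit. Unset Printing Implicit Defensive.
Import Order.TTheory GRing.Theory Num.Theory.
Local Open Scope ring_scope.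

(* xi_t = sum_{s=1}^S eps_{s,t}  (shocks indexed by 'I_m, s = 1..S is val s < S) *)
Definition xi_shock {T : Type} {R : realType} {m : nat} (S : nat)
  (eps : 'I_m -> T -> R) : T -> R :=
  fun w => \sum_(s < m | (s < S)%N) eps s w.

(* alpha_s = E[z_t eps_{s,t}] (a finite real under the L2 hypotheses) *)
Definition alpha_coef {d} {T : measurableType d} {R : realType}
  (P : probability T R) {m : nat} (z : T -> R) (eps : 'I_m -> T -> R)
  (s : 'I_m) : R := fine ('E_P[(z * eps s)%R])%E.

Definition weight {R : realType} {m : nat} (S : nat) (alpha : 'I_m -> R)
  (s : 'I_m) : R := alpha s / \sum_(s' < m | (s' < S)%N) alpha s'.

(* real-valued covariance (finite under the L2 hypotheses) *)
Definition cov {d} {T : measurableType d} {R : realType}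
  (P : probability T R) (X Y : T -> R) : R := fine (covariance P X Y).

From HB Require Import structures.
From mathcomp Require Import all_boot all_order all_algebra.
From mathcomp Require Import all_classical all_reals all_analysis.
Import Order.TTheory GRing.Theory Num.Theory numFieldNormedType.Exports.
Local Open Scope classical_set_scope.
Local Open Scope ring_scope.

(** Since z is uncorrelated with every shock not dated t, expanding
    Cov(y_{t+h}, z) term by term along the moving average leaves only the
    lag j = h, and the shocks beyond S drop out as well:
    Cov(y_{t+h}, z) = sum_{s <= S} theta_{h,ys} alpha_s.  The same formula at
    h = 0 for x_t gives, by the unit effect normalization, the denominator
    sum_{s <= S} alpha_s; dividing produces the weights. *)

Lemma cov_mean0l {d} {T : measurableType d} {R : realType}
    (P : probability T R) (X Z : T -> R) :
  X \in Lfun P 2%:E -> Z \in Lfun P 2%:E -> ('E_P[X] = 0)%E ->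
  cov P X Z = fine 'E_P[(Z * X)%R].
Proof.
move=> X2 Z2 EX0.
have Pfin : P setT \is a fin_num := fin_num_measure P _ measurableT.
rewrite /cov covarianceC covarianceE ?Lfun2_mul_Lfun1 ?Lfun_subset12 //.
by rewrite EX0 mule0 sube0.
Qed.

Lemma sum_ord_single_cvg_eq {R : realType} {F : nat -> R} {h : nat} {l : R} :
  (forall j, j != h -> F j = 0) ->
  (fun N : nat => \sum_(j < N) F j) @ \oo --> l -> l = F h.
Proof.
move=> F0 Fl; rewrite -(cvg_shiftn h.+1) in Fl.
suff sumE : [sequence \sum_(j < (N + h.+1)%N) F j]_N = cst (F h).
  by rewrite sumE in Fl; rewrite -(cvg_lim _ Fl) ?lim_cst.
apply/funext => N /=.
have hN : (h < N + h.+1)%N by rewrite addnS ltnS leq_addl.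
rewrite (bigD1 (Ordinal hN)) //= big1 ?addr0 // => j /negbTE jh.
by apply: F0; rewrite -val_eqE /= in jh; rewrite jh.
Qed.

Lemma sum_weightM {R : realType} {m : nat} (S : nat) (alpha c : 'I_m -> R) :
  \sum_(s < m | (s < S)%N) weight S alpha s * c s
  = (\sum_(s < m | (s < S)%N) c s * alpha s) / \sum_(s < m | (s < S)%N) alpha s.
Proof.
rewrite mulr_suml; apply: eq_bigr => s _.
by rewrite /weight mulrC mulrA.
Qed.

Lemma weight_ge0 {R : realType} {m : nat} (S : nat) (alpha : 'I_m -> R) :
  (forall s : 'I_m, (s < S)%N -> 0 <= alpha s) \/
  (forall s : 'I_m, (s < S)%N -> alpha s <= 0) ->
  forall s : 'I_m, (s < S)%N -> 0 <= weight S alpha s.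
Proof.
case=> alpha_sign s sS; rewrite /weight.
  by rewrite divr_ge0 ?sumr_ge0 ?alpha_sign.
by rewrite mulr_le0 ?invr_le0 ?sumr_le0 ?alpha_sign.
Qed.

Section instrument_covariance.
Context {R : realType} {d : measure_display} {T : measurableType d}.
Context {P : probability T R} {k m S : nat}.
Context {Theta : nat -> 'M[R]_(k, m)} {eps : int -> 'I_m -> T -> R}.
Context {Y : int -> 'I_k -> T -> R} {z : T -> R} {t : int}.
Hypothesis eps_L2 : forall u s, eps u s \in Lfun P 2%:E.
Hypothesis z_L2 : z \in Lfun P 2%:E.
Hypothesis eps_mean0 : forall u s, ('E_P[eps u s] = 0)%E.
Hypothesis Y_cov_termwise : forall u i,
  (fun N : nat => \sum_(j < N) \sum_(s < m)
     Theta j i s * cov P (eps (u - j%:Z) s) z) @ \oo --> cov P (Y u i) z.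
Hypothesis z_exog : forall s : 'I_m, (S <= s)%N ->
  ('E_P[(z * eps t s)%R] = 0)%E.
Hypothesis z_lead_lag : forall (j : int) (s : 'I_m), j != 0 ->
  ('E_P[(z * eps (t + j) s)%R] = 0)%E.

Let alpha := alpha_coef P z (eps t).

Lemma cov_shock_instrument u s :
  cov P (eps u s) z = if u == t then alpha s else 0.
Proof.
rewrite cov_mean0l //; have [-> // | ut] := eqVneq u t.
by rewrite -(subrKC t u) z_lead_lag ?subr_eq0.
Qed.

Lemma cov_response h i :
  cov P (Y (t + h%:Z) i) z = \sum_(s < m | (s < S)%N) Theta h i s * alpha s.
Proof.
have lagE j : (t + h%:Z - j%:Z == t) = (j == h).
  by rewrite -addrA -{2}[t]addr0 (inj_eq (addrI t)) subr_eq0 eqz_nat eq_sym.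
pose F j := \sum_(s < m) Theta j i s * cov P (eps (t + h%:Z - j%:Z) s) z.
have F0 j : j != h -> F j = 0.
  move=> /negbTE jh; apply: big1 => s _.
  by rewrite cov_shock_instrument lagE jh mulr0.
rewrite (sum_ord_single_cvg_eq F0 (Y_cov_termwise (t + h%:Z) i)) /F.
rewrite [RHS]big_mkcond; apply: eq_bigr => s _.
rewrite cov_shock_instrument lagE eqxx.
by case: ltnP => // Ss; rewrite /alpha /alpha_coef z_exog ?mulr0.
Qed.

End instrument_covariance.

Theorem proposition1 (R : realType) (d : measure_display) (T : measurableType d)
  (P : probability T R) (n m S : nat)
  (Theta : nat -> 'M[R]_(n.+1, m))
  (eps : int -> 'I_m -> T -> R)
  (Y : int -> 'I_(n.+1) -> T -> R)
  (z : T -> R) (t : int)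
  (* finite second moments *)
  (eps_L2 : forall u s, eps u s \in Lfun P 2%:E)
  (Y_L2 : forall u i, Y u i \in Lfun P 2%:E)
  (z_L2 : z \in Lfun P 2%:E)
  (* structural shocks: mean zero, positive variances, mutually uncorrelated *)
  (eps_mean0 : forall u s, ('E_P[eps u s] = 0)%E)
  (eps_var_pos : forall u s, (0 < 'V_P[eps u s])%E)
  (eps_uncorr : forall u s s', s != s' -> covariance P (eps u s) (eps u s') = 0%E)
  (* Y_t = sum_j Theta_j eps_{t-j}, the series converging almost surely *)
  (Y_MA : forall u i, {ae P, forall w,
     (fun N : nat => \sum_(j < N) \sum_(s < m) Theta j i s * eps (u - j%:Z) s w)
       @ \oo --> Y u i w})
  (* covariances with z can be computed term by term *)
  (Y_cov_termwise : forall u i,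
     (fun N : nat => \sum_(j < N) \sum_(s < m)
          Theta j i s * cov P (eps (u - j%:Z) s) z)
       @ \oo --> cov P (Y u i) z)
  (S_ge1 : (1 <= S)%N) (S_lem : (S <= m)%N)
  (* unit effect normalization *)
  (unit_norm : forall s : 'I_m, (s < S)%N -> Theta 0%N ord0 s = 1)
  (* instrument conditions *)
  (z_rel : ('E_P[(z * xi_shock S (eps t))%R] != 0)%E)
  (z_exog : forall s : 'I_m, (S <= s)%N -> ('E_P[(z * eps t s)%R] = 0)%E)
  (z_lead_lag : forall (j : int) (s : 'I_m), j != 0 ->
     ('E_P[(z * eps (t + j) s)%R] = 0)%E) :
  (forall h : nat,
     cov P (Y (t + h%:Z) ord_max) z / cov P (Y t ord0) z
     = \sum_(s < m | (s < S)%N)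
         weight S (alpha_coef P z (eps t)) s * Theta h ord_max s)
  /\
  ((forall s : 'I_m, (s < S)%N -> 0 <= alpha_coef P z (eps t) s) \/
   (forall s : 'I_m, (s < S)%N -> alpha_coef P z (eps t) s <= 0) ->
   forall s : 'I_m, (s < S)%N -> 0 <= weight S (alpha_coef P z (eps t)) s).
Proof.
have covR :=
  cov_response eps_L2 z_L2 eps_mean0 Y_cov_termwise z_exog z_lead_lag.
split; last exact: (@weight_ge0 R m S).
move=> h; have -> : Y t = Y (t + 0%:Z) by rewrite addr0.
rewrite sum_weightM !covR.
by under [X in _ / X]eq_bigr => s sS do rewrite unit_norm // mul1r.
Qed.
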